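(* Let $\mathcal{F}(\mathsf{REG},\mathsf{REG})$ be the class of all languages $L(\Phi)$ generated by F-systems $\Phi=(L_1,L_2)$ in which both the core language $L_1$ and the folding procedure language $L_2$ are regular. Then every language in $\mathcal{F}(\mathsf{REG},\mathsf{REG})$ is a linear (context-free) language, i.e., $\mathcal{F}(\mathsf{REG},\mathsf{REG})\subseteq \mathsf{LIN}$.
   Context: Let $\Sigma$ be a finite alphabet and $\Gamma=\{\mathtt{u},\mathtt{d}\}$. Define $f:\Sigma^*\times\Sigma\times\Gamma\to\Sigma^*$ by $f(x,a,\mathtt{u})=ax$ and $f(x,a,\mathtt{d})=xa$. The folding function $h:\Sigma^*\times\Gamma^*\to\Sigma^*$ is the partial function with $h(\varepsilon,\varepsilon)=\varepsilon$; if $|w|=|v|>0$ with $w=w'a$ ($a\in\Sigma$) and $v=v'b$ ($b\in\Gamma$), then $h(w,v)=f(h(w',v'),a,b)$; and $h(w,v)$ is undefined if $|w|\neq|v|$. An F-system is a pair $\Phi=(L_1,L_2)$ with $L_1\subseteq\Sigma^*$ and $L_2\subseteq\Gamma^*$; its language is $L(\Phi)=\{h(w,v)\mid w\in L_1, v\in L_2, |w|=|v|\}$. A linear grammar is a context-free grammar all of whose rules have the form $A\to uBv$ or $A\to u$ with $u,v$ terminal words and $A,B$ nonterminals; $\mathsf{LIN}$ is the class of languages generated by linear grammars, and $\mathsf{REG}$ the class of regular languages. *)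

From Stdlib Require List.
From mathcomp Require Import all_boot.
Set Implicit Arguments. Unset Strict Implicit. Unset Printing Implicit Defensive.

Definition language (A : Type) := seq A -> Prop.

Definition regular (A : Type) (L : language A) : Prop :=
  exists (Q : finType) (q0 : Q) (delta : Q -> A -> Q) (F : pred Q),
    forall w, L w <-> F (foldl delta q0 w).

Inductive gamma := gu | gd.

Definition ffold (S : Type) (x : seq S) (a : S) (b : gamma) : seq S :=
  match b with gu => a :: x | gd => rcons x a end.

(* The folding function h (partial): h(eps,eps)=eps,
   h(w'a, v'b) = f(h(w',v'), a, b), undefined when lengths differ. *)
Fixpoint hfold_rev (S : Type) (rw : seq S) (rv : seq gamma) : option (seq S) :=
  match rw, rv with
  | [::], [::] => Some [::]
  | a :: rw', b :: rv' =>
      match hfold_rev rw' rv' with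
      | Some x => Some (ffold x a b)
      | None => None
      end
  | _, _ => None
  end.

Definition hfold (S : Type) (w : seq S) (v : seq gamma) : option (seq S) :=
  hfold_rev (rev w) (rev v).

Definition F_lang (S : Type) (L1 : language S) (L2 : language gamma) : language S :=
  fun z => exists w v, L1 w /\ L2 v /\ size w = size v /\ hfold w v = Some z.

Inductive lin_rule (N S : Type) :=
  | RNonterm of N & seq S & N & seq S
  | RTerm of N & seq S.

Record lin_grammar (S : Type) := LinGrammar {
  nonterm : finType;
  start : nonterm;
  rules : seq (lin_rule nonterm S) }.

Inductive derives (S : Type) (G : lin_grammar S) : nonterm G -> seq S -> Prop :=
  | der_term A u : Stdlib.Lists.List.In (RTerm A u) (rules G) -> @derives S G A u
  | der_nonterm A u B v w : Stdlib.Lists.List.In (RNonterm A u B v) (rules G) ->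
      @derives S G B w -> @derives S G A (u ++ w ++ v).

Definition lin_lang (S : Type) (G : lin_grammar S) : language S :=
  fun w => @derives S G (start G) w.

Definition linear (S : Type) (L : language S) : Prop :=
  exists G : lin_grammar S, forall w, L w <-> lin_lang G w.

From mathcomp Require Import all_boot.
From Stdlib Require List.
Set Implicit Arguments. Unset Strict Implicit. Unset Printing Implicit Defensive.

(* Since h(w'a, v'b) is h(w', v') with a added on the left (b = u) or on the
   right (b = d), the last letters of w and v contribute the outermost letter
   of h(w, v).  A linear grammar can therefore generate h(w, v) from the
   outside in, reading w and v backwards while remembering the pair of states
   that two DFAs for L1 and L2 reach on the remaining prefixes: the start
   symbol guesses a pair of accepting states, each rule undoes one letter of
   both words, and the derivation may stop once both automata are back in
   their initial states. *)

Lemma In_cat (T : Type) (x : T) (s1 s2 : seq T) :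
  List.In x (s1 ++ s2) <-> List.In x s1 \/ List.In x s2.
Proof. exact: List.in_app_iff. Qed.

Lemma In_map (T : eqType) (U : Type) (f : T -> U) (y : U) (s : seq T) :
  List.In y (map f s) <-> exists2 x, x \in s & y = f x.
Proof.
elim: s => [|x s IH] /=; first by split=> // [[]].
rewrite IH; split=> [[<-|[x' sx' ->]] | [x' /predU1P[->|sx'] ->]].
- by exists x; rewrite ?mem_head.
- by exists x'; rewrite // in_cons sx' orbT.
- by left.
- by right; exists x'.
Qed.

Lemma hfold_rcons (S : Type) (w : seq S) (v : seq gamma) a b :
  hfold (rcons w a) (rcons v b) = omap (fun x => ffold x a b) (hfold w v).
Proof. by rewrite /hfold !rev_rcons /=; case: hfold_rev. Qed.

Lemma hfold_size (S : Type) (w : seq S) (v : seq gamma) z :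
  hfold w v = Some z -> size w = size v.
Proof.
rewrite /hfold -(size_rev w) -(size_rev v).
elim: (rev w) (rev v) z => [|a rw IH] [|b rv] z //=.
by case E: hfold_rev => [x|] // _; rewrite (IH _ _ E).
Qed.

Section FoldGrammar.

Variables (S Q1 Q2 : finType).
Variables (s1 : Q1) (d1 : Q1 -> S -> Q1) (F1 : pred Q1).
Variables (s2 : Q2) (d2 : Q2 -> gamma -> Q2) (F2 : pred Q2).

Local Notation N := (option (Q1 * Q2)).

Definition fold_lhs (a : S) (b : gamma) : seq S := if b is gu then [:: a] else [::].
Definition fold_rhs (a : S) (b : gamma) : seq S := if b is gd then [:: a] else [::].

Lemma ffold_lhs_rhs (x : seq S) a b : ffold x a b = fold_lhs a b ++ x ++ fold_rhs a b.
Proof. by case: b; rewrite /= ?cats0 ?cats1. Qed.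

Inductive fold_rule : lin_rule N S -> Prop :=
  | FoldInit : fold_rule (RTerm (Some (s1, s2)) [::])
  | FoldAccept p q : F1 p -> F2 q -> fold_rule (RNonterm None [::] (Some (p, q)) [::])
  | FoldStep p q a b : fold_rule (RNonterm (Some (d1 p a, d2 q b))
                         (fold_lhs a b) (Some (p, q)) (fold_rhs a b)).

Definition fold_step (x : Q1 * Q2 * S) (b : gamma) : lin_rule N S :=
  RNonterm (Some (d1 x.1.1 x.2, d2 x.1.2 b))
    (fold_lhs x.2 b) (Some x.1) (fold_rhs x.2 b).

Definition fold_rules : seq (lin_rule N S) :=
  RTerm (Some (s1, s2)) [::]
  :: [seq RNonterm None [::] (Some x) [::] | x <- enum {: Q1 * Q2} & F1 x.1 && F2 x.2]
  ++ [seq fold_step x gu | x <- enum {: Q1 * Q2 * S}]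
  ++ [seq fold_step x gd | x <- enum {: Q1 * Q2 * S}].

Lemma In_fold_rules r : List.In r fold_rules <-> fold_rule r.
Proof.
rewrite /= !In_cat !In_map; split.
- case=> [<-|[[[p q] + ->]|[[[[p q] a] _ ->]|[[[p q] a] _ ->]]]]; first exact: FoldInit.
  + by rewrite mem_filter => /andP[/andP[Fp Fq] _]; exact: FoldAccept.
  + exact: FoldStep p q a gu.
  + exact: FoldStep p q a gd.
- case=> [|p q Fp Fq|p q a b]; first by left.
  + by right; left; exists (p, q); rewrite // mem_filter Fp Fq mem_enum.
  + by right; right; case: b; [left|right]; exists (p, q, a); rewrite ?mem_enum.
Qed.

Definition fold_grammar : lin_grammar S :=
  {| nonterm := N; start := None; rules := fold_rules |}.

Definition fold_reach (p : Q1) (q : Q2) : language S :=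
  fun z => exists w v, [/\ foldl d1 s1 w = p, foldl d2 s2 v = q & hfold w v = Some z].

Lemma derives_hfold w v z : hfold w v = Some z ->
  @derives S fold_grammar (Some (foldl d1 s1 w, foldl d2 s2 v)) z.
Proof.
elim/last_ind: w v z => [|w a IH] v z; case/lastP: v => [|v b] hwv;
  have := hfold_size hwv; rewrite ?size_rcons // => _.
- by case: hwv => <-; apply/der_term/In_fold_rules; constructor.
- move: hwv; rewrite hfold_rcons !foldl_rcons.
  case hwv: hfold => [x|] //= [<-]; rewrite ffold_lhs_rhs.
  by apply: der_nonterm (IH _ _ hwv); apply/In_fold_rules; constructor.
Qed.

Definition fold_sem (A : N) : language S :=
  if A is Some (p, q) then fold_reach p q
  else fun z => exists p q, [/\ F1 p, F2 q & fold_reach p q z].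

Lemma derives_fold_sem A z : @derives S fold_grammar A z -> fold_sem A z.
Proof.
elim=> {A z} [A u /In_fold_rules rule | A u B v w /In_fold_rules rule _ IH].
- move E: (RTerm A u) rule => r rule.
  by case: r / rule E => // -[-> ->]; exists [::], [::].
- move: IH; move E: (RNonterm A u B v) rule => r rule.
  case: r / rule E => // [p q Fp Fq|p q a b] [-> -> -> ->] /= IH.
  + by exists p, q; rewrite cats0.
  + have [w' [v' [<- <- hwv]]] := IH.
    exists (rcons w' a), (rcons v' b).
    by rewrite !foldl_rcons hfold_rcons hwv /= ffold_lhs_rhs.
Qed.

Lemma derives_start z :
  @derives S fold_grammar None z <-> exists p q, [/\ F1 p, F2 q & fold_reach p q z].
Proof.
split; first exact: derives_fold_sem.
case=> p [q [Fp Fq [w [v [Ew Ev hwv]]]]]; subst p q.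
rewrite -[z]cats0 -[z ++ _]cat0s; apply: der_nonterm (derives_hfold hwv).
by apply/In_fold_rules; constructor.
Qed.

End FoldGrammar.

Theorem theorem1 (Sigma : finType) (L1 : language Sigma) (L2 : language gamma) :
  regular L1 -> regular L2 -> linear (F_lang L1 L2).
Proof.
move=> [Q1 [s1 [d1 [F1 L1E]]]] [Q2 [s2 [d2 [F2 L2E]]]].
exists (fold_grammar s1 d1 F1 s2 d2 F2) => z.
rewrite /lin_lang derives_start; split.
- case=> w [v [/L1E Fw [/L2E Fv [_ hwv]]]].
  by exists (foldl d1 s1 w), (foldl d2 s2 v); split=> //; exists w, v.
- case=> p [q [Fp Fq [w [v [Ew Ev hwv]]]]]; subst p q.
  exists w, v; split; first exact/L1E.
  split; first exact/L2E.
  by split=> //; apply: hfold_size hwv.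
Qed.
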